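(* Suppose $q^{2k}\neq1$. Then there are algebra homomorphisms into $\mathrm{Cl}_q(n,k)$ defined on generators as follows. (1) For $\mathfrak{g}=\mathfrak{sl}_n$: $\Theta\colon U_q(\mathfrak{g},k)\to\mathrm{Cl}_q(n,k)$ with $E_i\mapsto\psi_i\psi_{i+1}^*$, $F_i\mapsto\psi_{i+1}\psi_i^*$, $K_i\mapsto\omega_i\omega_{i+1}^{-1}$ for $i=1,\dots,n-1$. (2) For $\mathfrak{g}=\mathfrak{so}_{2n}$: $\Theta\colon U_q(\mathfrak{g},k)\to\mathrm{Cl}_q(n,k)$ with $E_i\mapsto\psi_i\psi_{i+1}^*$, $F_i\mapsto\psi_{i+1}\psi_i^*$, $K_i\mapsto\omega_i\omega_{i+1}^{-1}$ for $i=1,\dots,n-1$, and $E_n\mapsto\psi_{n-1}\psi_n$, $F_n\mapsto\psi_n^*\psi_{n-1}^*$, $K_n\mapsto q\omega_{n-1}\omega_n$. (3) For $\mathfrak{g}=\mathfrak{so}_{2n+1}$, if $q^{1/2}\in\mathbb{k}$: an algebra homomorphism $U_{q^{1/2}}(\mathfrak{g},k)\to\mathrm{Cl}_q(n,k)$ with $E_i\mapsto\psi_i\psi_{i+1}^*$, $F_i\mapsto\psi_{i+1}\psi_i^*$, $K_i\mapsto\omega_i\omega_{i+1}^{-1}$ for $i=1,\dots,n-1$, and $E_n\mapsto\psi_n$, $F_n\mapsto\psi_n^*$, $K_n\mapsto q^{1/2}\omega_n$.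
   Context: Let $\mathbb{k}$ be a field of characteristic different from $2$, let $q\in\mathbb{k}^\times$, and let $n,k$ be positive integers. The quantum Clifford algebra $\mathrm{Cl}_q(n,k)$ is the unital associative $\mathbb{k}$-algebra generated by $\psi_a,\psi_a^*,\omega_a,\omega_a^{-1}$ for $a\in\{1,\dots,n\}$, subject to the relations (for all $a,b$): $\omega_a\omega_b=\omega_b\omega_a$; $\omega_a\omega_a^{-1}=1$; $\omega_a\psi_b=q^{\delta_{ab}}\psi_b\omega_a$; $\omega_a\psi_b^*=q^{-\delta_{ab}}\psi_b^*\omega_a$; $\psi_a\psi_b+\psi_b\psi_a=0$; $\psi_a^*\psi_b^*+\psi_b^*\psi_a^*=0$; $\psi_a\psi_a^*+q^k\psi_a^*\psi_a=\omega_a^{-k}$; $\psi_a\psi_a^*+q^{-k}\psi_a^*\psi_a=\omega_a^{k}$; $\psi_a\psi_b^*+\psi_b^*\psi_a=0$ if $a\neq b$. Twisted quantum group: let $\mathfrak{g}$ be a semisimple Lie algebra with simple roots $\alpha_1,\dots,\alpha_r$, Cartan matrix $A=(a_{ij})$ and positive coprime integers $d_i$ with $DA$ symmetric, $D=\mathrm{diag}(d_1,\dots,d_r)$. For a parameter $Q\in\mathbb{k}$ (taken transcendental, as is the standing convention in the paper's definition of $U_Q$), put $Q_i=Q^{d_i}$, $[m]_{x}=(x^m-x^{-m})/(x-x^{-1})$, $[m]_x!=[m]_x\cdots[1]_x$, and $q$-binomials $\begin{bmatrix} m\\ s\end{bmatrix}_x=[m]_x!/([s]_x![m-s]_x!)$.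 Then $U_Q(\mathfrak{g},k)$ is the unital associative $\mathbb{k}$-algebra generated by $E_i,F_i,K_i,K_i^{-1}$ ($i=1,\dots,r$) with relations $K_iK_j=K_jK_i$, $K_iK_i^{-1}=K_i^{-1}K_i=1$, $K_iE_jK_i^{-1}=Q_i^{a_{ij}}E_j$, $K_iF_jK_i^{-1}=Q_i^{-a_{ij}}F_j$, $E_iF_j-F_jE_i=\delta_{ij}\frac{K_i^k-K_i^{-k}}{Q_i^k-Q_i^{-k}}$, and for $i\neq j$ the Serre relations $\sum_{m=0}^{1-a_{ij}}(-1)^m\begin{bmatrix}1-a_{ij}\\ m\end{bmatrix}_{Q_i^k}X_i^mX_jX_i^{1-a_{ij}-m}=0$ for $X\in\{E,F\}$. Conventions (with $e_1,\dots,e_n$ orthonormal): for $\mathfrak{sl}_n$, $\alpha_i=e_i-e_{i+1}$ ($1\le i\le n-1$), all $d_i=1$; for $\mathfrak{so}_{2n}$, $\alpha_i=e_i-e_{i+1}$ ($i<n$), $\alpha_n=e_{n-1}+e_n$, all $d_i=1$; for $\mathfrak{so}_{2n+1}$, $\alpha_i=e_i-e_{i+1}$ ($i<n$), $\alpha_n=e_n$, with $d_i=2$ for $i<n$ and $d_n=1$; and $a_{ij}=2(\alpha_i,\alpha_j)/(\alpha_i,\alpha_i)$. In (1),(2) $Q=q$; in (3) $Q=q^{1/2}$. *)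

From HB Require Import structures.
From mathcomp Require Import all_boot all_order all_algebra.
Set Implicit Arguments. Unset Strict Implicit. Unset Printing Implicit Defensive.
Import Order.TTheory GRing.Theory Num.Theory.
Local Open Scope ring_scope.

(* Defining relations of Cl_q(n,k), for a family of elements
   psi a, psis a (the psi-star), om a (= omega_a), omi a (= omega_a^{-1})
   (a = 1..n) in a k-algebra A.  Cl_q(n,k) is the universal such family. *)
Definition Cl_relations (K : fieldType) (A : algType K) (q : K) (n k : nat)
  (psi psis om omi : nat -> A) : Prop :=
  forall a b : nat, (1 <= a <= n)%N -> (1 <= b <= n)%N ->
  om a * om b = om b * om a /\
  om a * omi a = 1 /\
  omi a * om a = 1 /\
  om a * psi b = q ^+ (a == b) *: (psi b * om a) /\
  om a * psis b = q ^- (a == b) *: (psis b * om a) /\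
  psi a * psi b + psi b * psi a = 0 /\
  psis a * psis b + psis b * psis a = 0 /\
  psi a * psis a + q ^+ k *: (psis a * psi a) = omi a ^+ k /\
  psi a * psis a + q ^- k *: (psis a * psi a) = om a ^+ k /\
  (a != b -> psi a * psis b + psis b * psi a = 0).

(* Symmetric Gaussian binomial [m choose s]_x as a Laurent polynomial in x,
   via the q-Pascal rule [m s] = x^s [m-1 s] + x^{-(m-s)} [m-1 s-1]. *)
Fixpoint qbinom (K : fieldType) (x : K) (m : nat) : nat -> K :=
  fun s =>
  match m, s with
  | _, 0%N => 1
  | 0%N, _.+1 => 0
  | m'.+1, s'.+1 => x ^+ s'.+1 * qbinom x m' s'.+1 + x ^- (m' - s') * qbinom x m' s'
  end.

Definition serre (K : fieldType) (A : algType K) (x : K) (N : nat) (Xi Xj : A) : A :=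
  \sum_(0 <= m < N.+1) ((-1) ^+ m * qbinom x N m) *: (Xi ^+ m * Xj * Xi ^+ (N - m)).

(* Defining relations of U_Q(g,k) (rank r, symmetrizers d, Cartan matrix a)
   for a family E, Fg, Kg, Ki (= K^{-1}) of elements of A. *)
Definition U_relations (K : fieldType) (A : algType K) (Q : K) (k r : nat)
  (d : nat -> nat) (a : nat -> nat -> int) (E Fg Kg Ki : nat -> A) : Prop :=
  forall i j : nat, (1 <= i <= r)%N -> (1 <= j <= r)%N ->
  let Qi := Q ^+ d i in
  Kg i * Kg j = Kg j * Kg i /\
  Kg i * Ki i = 1 /\
  Ki i * Kg i = 1 /\
  Kg i * E j * Ki i = Qi ^ (a i j) *: E j /\
  Kg i * Fg j * Ki i = Qi ^ (- a i j) *: Fg j /\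
  E i * Fg j - Fg j * E i =
    (if i == j then (Qi ^+ k - Qi ^- k)^-1 *: (Kg i ^+ k - Ki i ^+ k) else 0) /\
  (i != j ->
     serre (Qi ^+ k) `|1 - a i j|%N (E i) (E j) = 0 /\
     serre (Qi ^+ k) `|1 - a i j|%N (Fg i) (Fg j) = 0).

Definition e_ (l : nat) : nat -> int := fun m => ((m == l) : nat)%:Z.
Definition inner (n : nat) (u v : nat -> int) : int :=
  \sum_(1 <= l < n.+1) u l * v l.
Definition cartan_of (n : nat) (alpha : nat -> nat -> int) (i j : nat) : int :=
  ((2 * inner n (alpha i) (alpha j)) %/ inner n (alpha i) (alpha i))%Z.

Definition root_sl (i : nat) : nat -> int := fun m => e_ i m - e_ i.+1 m.
Definition root_so_even (n i : nat) : nat -> int :=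
  if (i < n)%N then root_sl i else fun m => e_ n.-1 m + e_ n m.
Definition root_so_odd (n i : nat) : nat -> int :=
  if (i < n)%N then root_sl i else e_ n.
Definition d_so_odd (n i : nat) : nat := if (i < n)%N then 2%N else 1%N.

Section Images.
Variables (K : fieldType) (A : algType K) (q : K) (n : nat)
  (psi psis om omi : nat -> A).

Definition Th_E (i : nat) : A := psi i * psis i.+1.
Definition Th_F (i : nat) : A := psi i.+1 * psis i.
Definition Th_K (i : nat) : A := om i * omi i.+1.
Definition Th_Ki (i : nat) : A := om i.+1 * omi i.

Definition ThD_E (i : nat) : A := if (i < n)%N then Th_E i else psi n.-1 * psi n.
Definition ThD_F (i : nat) : A := if (i < n)%N then Th_F i else psis n * psis n.-1.
Definition ThD_K (i : nat) : A := if (i < n)%N then Th_K i else q *: (om n.-1 * om n).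
Definition ThD_Ki (i : nat) : A :=
  if (i < n)%N then Th_Ki i else q^-1 *: (omi n * omi n.-1).

(* (3) so_{2n+1}, with s = q^{1/2} *)
Variable s : K.
Definition ThB_E (i : nat) : A := if (i < n)%N then Th_E i else psi n.
Definition ThB_F (i : nat) : A := if (i < n)%N then Th_F i else psis n.
Definition ThB_K (i : nat) : A := if (i < n)%N then Th_K i else s *: om n.
Definition ThB_Ki (i : nat) : A := if (i < n)%N then Th_Ki i else s^-1 *: omi n.
End Images.

(* Conjugation by omega_a scales
   psi_b and psi^*_b by q^(+-delta_ab), so every monomial in the psi's has a weight in
   Z^n, on which K_i acts by q^(alpha_i, weight); with Q_i^(a_ij) = q^(alpha_i, alpha_j)
   this gives the relations between K and E, F.  Generators with distinct labels
   anticommute and square to zero (char k <> 2), so for i <> j the images of E_i, F_j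
   commute, and in each Serre relation either the two elements commute or every term
   contains some generator twice with only (anti)commuting factors in between.  Finally
   the two quadratic relations of Cl_q(n,k) express psi_a psi^*_a and psi^*_a psi_a
   through omega_a^(+-k) (this needs q^(2k) <> 1), from which [E_i, F_i] is computed. *)

From HB Require Import structures.
From mathcomp Require Import all_boot all_order all_algebra.
From mathcomp Require Import zify ring.
Set Implicit Arguments. Unset Strict Implicit. Unset Printing Implicit Defensive.
Import Order.TTheory GRing.Theory Num.Theory.
Local Open Scope ring_scope.

Section SignedCommutation.
Variable R : pzRingType.
Implicit Types a b c x y z u v f g : R.

Definition acomm x y := x * y = - (y * x).

Definition signed_comm x y := GRing.comm x y \/ acomm x y.

Lemma acommC x y : acomm x y -> acomm y x.
Proof. by rewrite /acomm => ->; rewrite opprK. Qed.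

Lemma comm_acommM x y z : acomm x y -> acomm x z -> GRing.comm x (y * z).
Proof. by move=> xy xz; rewrite /GRing.comm mulrA xy mulNr -mulrA xz mulrN opprK mulrA. Qed.

Lemma comm_acomm_pairs x y u v :
  acomm x u -> acomm x v -> acomm y u -> acomm y v -> GRing.comm (x * y) (u * v).
Proof.
by move=> xu xv yu yv; apply/commr_sym/commrM; apply/commr_sym/comm_acommM.
Qed.

Lemma comm_rinv x y y' : y * y' = 1 -> y' * y = 1 -> GRing.comm x y -> GRing.comm x y'.
Proof.
move=> yy' y'y xy; rewrite /GRing.comm -[x * y']mul1r -y'y -mulrA (mulrA y x) -xy.
by rewrite -!mulrA yy' mulr1.
Qed.

Lemma mulr_pair1 x x' y y' : x * x' = 1 -> y * y' = 1 -> x * y * (y' * x') = 1.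
Proof. by move=> xx' yy'; rewrite mulrA -(mulrA x) yy' mulr1. Qed.

Lemma signed_commM x y z : signed_comm x y -> signed_comm x z -> signed_comm x (y * z).
Proof.
rewrite /signed_comm /acomm /GRing.comm.
by case=> xy [] xz; [left | right | right | left];
  rewrite mulrA xy ?mulNr -mulrA xz ?mulrN ?opprK mulrA.
Qed.

Lemma signed_comm_sandwich0 f y : f * f = 0 -> signed_comm f y -> f * y * f = 0.
Proof. by move=> ff [] ->; rewrite ?mulNr -mulrA ff mulr0 ?oppr0. Qed.

Lemma pair_sq0 f g : f * f = 0 -> signed_comm f g -> f * g * (f * g) = 0.
Proof. by move=> ff fg; rewrite mulrA signed_comm_sandwich0 ?mul0r. Qed.

Lemma pair_sandwich0l f g y :
  f * f = 0 -> signed_comm f g -> signed_comm f y -> f * g * y * (f * g) = 0.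
Proof.
move=> ff fg fy; have -> : f * g * y * (f * g) = f * (g * y) * f * g by rewrite !mulrA.
by rewrite signed_comm_sandwich0 ?mul0r //; apply: signed_commM.
Qed.

Lemma pair_sandwich0r f g y :
  g * g = 0 -> signed_comm g f -> signed_comm g y -> f * g * y * (f * g) = 0.
Proof.
move=> gg gf gy; have -> : f * g * y * (f * g) = f * (g * (y * f) * g) by rewrite !mulrA.
by rewrite signed_comm_sandwich0 ?mulr0 //; apply: signed_commM.
Qed.

Lemma comm_of_mul0 x y : x * y = 0 -> y * x = 0 -> GRing.comm x y.
Proof. by rewrite /GRing.comm => -> ->. Qed.

Lemma pairs_mul0_inner a b c : b * b = 0 -> a * b * (b * c) = 0.
Proof. by move=> bb; rewrite mulrA -(mulrA a) bb mulr0 mul0r. Qed.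

Lemma pairs_mul0_outer a b c : a * a = 0 -> signed_comm a (b * c) -> a * b * (c * a) = 0.
Proof. by move=> aa abc; rewrite -mulrA (mulrA b) mulrA signed_comm_sandwich0. Qed.

Lemma pairs_mul0_first a b c : a * a = 0 -> signed_comm a b -> a * b * (a * c) = 0.
Proof. by move=> aa ab; rewrite mulrA signed_comm_sandwich0 ?mul0r. Qed.

Lemma pairs_mul0_second a b c : b * b = 0 -> signed_comm b c -> a * b * (c * b) = 0.
Proof. by move=> bb bc; rewrite -mulrA (mulrA b) signed_comm_sandwich0 ?mulr0. Qed.

End SignedCommutation.

Section AlgebraFacts.
Variables (K : fieldType) (A : algType K).
Implicit Types (x : K) (Xi Xj : A).

Lemma commrZl c (u v : A) : GRing.comm u v -> GRing.comm (c *: u) v.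
Proof. by move=> uv; rewrite /GRing.comm -scalerAl -scalerAr uv. Qed.

Lemma commrZr c (u v : A) : GRing.comm u v -> GRing.comm u (c *: v).
Proof. by move=> uv; apply/commr_sym/commrZl/commr_sym. Qed.

Lemma scaler_conj c (u x v : A) : c != 0 -> c *: u * x * (c^-1 *: v) = u * x * v.
Proof. by move=> c0; rewrite -!scalerAl -scalerAr scalerA mulfV // scale1r. Qed.

Lemma scalerMV c (u v : A) : c != 0 -> c *: u * (c^-1 *: v) = u * v.
Proof. by move=> c0; rewrite -scalerAl -scalerAr scalerA mulfV // scale1r. Qed.

Lemma scalerVM c (u v : A) : c != 0 -> c^-1 *: u * (c *: v) = u * v.
Proof. by move=> c0; rewrite -[c in c *: v]invrK scalerMV ?invr_eq0. Qed.

Lemma serre1_comm x Xi Xj : GRing.comm Xi Xj -> serre x 1 Xi Xj = 0.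
Proof.
rewrite /serre big_nat_recr // big_nat1 /= expr0 expr1 mulr1 mul1r scale1r.
by rewrite subn0 subnn expr1 !expr0 mulr0 add0r invr1 !mulr1 scaleN1r => ->; rewrite subrr.
Qed.

(* Every term of the Serre sum contains [Xi ^+ 2] except, for N = 2, the middle one. *)
Lemma serre_sq0 x N Xi Xj : Xi * Xi = 0 -> (1 < N)%N ->
  (N = 2%N -> Xi * Xj * Xi = 0) -> serre x N Xi Xj = 0.
Proof.
move=> Xi2 N2 mid; rewrite /serre big_nat big1 // => m /andP [_ ltmN].
have Xi_hi p : (1 < p)%N -> Xi ^+ p = 0.
  by move=> p2; rewrite -(subnK p2) exprD expr2 Xi2 mulr0.
have [m2|m1] := leqP 2 m; first by rewrite Xi_hi // !mul0r scaler0.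
have [Nm2|Nm1] := leqP 2 (N - m); first by rewrite (Xi_hi _ Nm2) mulr0 scaler0.
have [-> eN] : m = 1%N /\ N = 2%N by lia.
by rewrite eN subSnn !expr1 mid // scaler0.
Qed.

End AlgebraFacts.

Section Roots.
Variable n : nat.
Implicit Types (u v w : nat -> int).

Lemma inner_e a w : (1 <= a <= n)%N -> inner n (e_ a) w = w a.
Proof.
move=> ha; rewrite /inner (bigD1_seq a) ?iota_uniq ?mem_index_iota //=.
by rewrite /e_ eqxx mul1r big1 ?addr0 // => l /negbTE->; rewrite mul0r.
Qed.

Lemma innerDl u v w : inner n (fun m => u m + v m) w = inner n u w + inner n v w.
Proof. by rewrite /inner -big_split; apply: eq_bigr => l _; rewrite mulrDl. Qed.

Lemma innerNl u w : inner n (fun m => - u m) w = - inner n u w.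
Proof. by rewrite /inner -sumrN; apply: eq_bigr => l _; rewrite mulNr. Qed.

Lemma innerNr u w : inner n u (fun m => - w m) = - inner n u w.
Proof. by rewrite /inner -sumrN; apply: eq_bigr => l _; rewrite mulrN. Qed.

Lemma inner_root_sl i w : (1 <= i < n)%N -> inner n (root_sl i) w = w i - w i.+1.
Proof.
by move=> hi; rewrite innerDl innerNl !inner_e //; lia.
Qed.

Lemma inner_root_so_even i w : (2 <= n)%N -> (1 <= i <= n)%N ->
  inner n (root_so_even n i) w = if (i < n)%N then w i - w i.+1 else w n.-1 + w n.
Proof.
move=> n2 hi; rewrite /root_so_even; case: ifP => hin; first by rewrite inner_root_sl //; lia.
by rewrite innerDl !inner_e //; lia.
Qed.

Lemma inner_root_so_odd i w : (1 <= i <= n)%N ->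
  inner n (root_so_odd n i) w = if (i < n)%N then w i - w i.+1 else w n.
Proof.
move=> hi; rewrite /root_so_odd; case: ifP => hin; first by rewrite inner_root_sl //; lia.
by rewrite inner_e //; lia.
Qed.

Lemma cartan_of_norm2 (alpha : nat -> nat -> int) i j :
  inner n (alpha i) (alpha i) = 2 -> cartan_of n alpha i j = inner n (alpha i) (alpha j).
Proof. by move=> h2; rewrite /cartan_of h2 mulKz. Qed.

Lemma cartan_of_norm1 (alpha : nat -> nat -> int) i j :
  inner n (alpha i) (alpha i) = 1 -> cartan_of n alpha i j = 2 * inner n (alpha i) (alpha j).
Proof. by move=> h1; rewrite /cartan_of h1 divz1. Qed.

End Roots.

Section Clifford.
Variables (K : fieldType) (A : algType K) (q : K) (n k : nat).
Variables (psi psis om omi : nat -> A).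
Hypotheses (two0 : (2%:R : K) != 0) (q0 : q != 0).
Hypothesis Cl : Cl_relations q n k psi psis om omi.
Local Notation rng a := (1 <= a <= n)%N.

Lemma comm_om a b : rng a -> rng b -> GRing.comm (om a) (om b).
Proof. by move=> ha hb; case: (Cl ha hb). Qed.

Lemma om_omi a : rng a -> om a * omi a = 1.
Proof. by move=> ha; case: (Cl ha ha) => _ []. Qed.

Lemma omi_om a : rng a -> omi a * om a = 1.
Proof. by move=> ha; case: (Cl ha ha) => _ [_ []]. Qed.

Lemma comm_om_omi a b : rng a -> rng b -> GRing.comm (om a) (omi b).
Proof. by move=> ha hb; apply: comm_rinv (om_omi hb) (omi_om hb) (comm_om ha hb). Qed.

Lemma comm_omi a b : rng a -> rng b -> GRing.comm (omi a) (omi b).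
Proof.
move=> ha hb; apply: comm_rinv (om_omi hb) (omi_om hb) _.
exact/commr_sym/comm_om_omi.
Qed.

Lemma acomm_psi a b : rng a -> rng b -> acomm (psi a) (psi b).
Proof.
by move=> ha hb; case: (Cl ha hb) => _ [_ [_ [_ [_ [/eqP]]]]]; rewrite addr_eq0 => /eqP.
Qed.

Lemma acomm_psis a b : rng a -> rng b -> acomm (psis a) (psis b).
Proof.
by move=> ha hb; case: (Cl ha hb) => _ [_ [_ [_ [_ [_ [/eqP]]]]]]; rewrite addr_eq0 => /eqP.
Qed.

Lemma acomm_psi_psis a b : rng a -> rng b -> a != b -> acomm (psi a) (psis b).
Proof.
move=> ha hb ab; case: (Cl ha hb) => _ [_ [_ [_ [_ [_ [_ [_ [_ /(_ ab) /eqP]]]]]]]].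
by rewrite addr_eq0 => /eqP.
Qed.

Lemma acomm_psis_psi a b : rng a -> rng b -> a != b -> acomm (psis a) (psi b).
Proof. by move=> ha hb ab; apply/acommC/acomm_psi_psis; rewrite // eq_sym. Qed.

Lemma sq0_of_acomm (x : A) : acomm x x -> x * x = 0.
Proof.
move=> xx; have : (2%:R : K) *: (x * x) = 0 by rewrite scaler_nat mulr2n {1}xx addNr.
by move/eqP; rewrite scaler_eq0 (negbTE two0) => /eqP.
Qed.

Lemma psi_sq0 a : rng a -> psi a * psi a = 0.
Proof. by move=> ha; apply/sq0_of_acomm/acomm_psi. Qed.

Lemma psis_sq0 a : rng a -> psis a * psis a = 0.
Proof. by move=> ha; apply/sq0_of_acomm/acomm_psis. Qed.

Definition weight (X : A) (w : nat -> int) :=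
  forall a, rng a -> om a * X * omi a = q ^ w a *: X.

Lemma weight_psi b : rng b -> weight (psi b) (e_ b).
Proof.
move=> hb a ha; case: (Cl ha hb) => _ [_ [_ [-> _]]].
by rewrite -scalerAl -mulrA om_omi // mulr1 /e_ eq_sym -exprnP.
Qed.

Lemma weight_psis b : rng b -> weight (psis b) (fun a => - e_ b a).
Proof.
move=> hb a ha; case: (Cl ha hb) => _ [_ [_ [_ [-> _]]]].
by rewrite -scalerAl -mulrA om_omi // mulr1 /e_ eq_sym -exprnN.
Qed.

Lemma weightM X Y u v : weight X u -> weight Y v -> weight (X * Y) (fun a => u a + v a).
Proof.
move=> hX hY a ha; have -> : om a * (X * Y) * omi a = om a * X * omi a * (om a * Y * omi a).
  by rewrite -!mulrA (mulrA (omi a)) omi_om // mul1r.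
by rewrite hX // hY // -scalerAl -scalerAr scalerA expfzDr.
Qed.

Lemma weight_eq X u v : weight X u -> u =1 v -> weight X v.
Proof. by move=> hX uv a ha; rewrite -uv hX. Qed.

Lemma weight_conjV X w a : weight X w -> rng a -> omi a * X * om a = q ^ (- w a) *: X.
Proof.
move=> hX ha; have {2}-> : X = omi a * (om a * X * omi a) * om a.
  by rewrite !mulrA omi_om // mul1r -mulrA omi_om // mulr1.
by rewrite hX // -scalerAr -scalerAl scalerA -expfzDr // addNr expr0z scale1r.
Qed.

Lemma weight_conj_om_omi X w a b : weight X w -> rng a -> rng b ->
  om a * omi b * X * (om b * omi a) = q ^ (w a - w b) *: X.
Proof.
move=> hX ha hb; have -> : om a * omi b * X * (om b * omi a) = om a * (omi b * X * om b) * omi a.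
  by rewrite !mulrA.
by rewrite (weight_conjV hX hb) -scalerAr -scalerAl hX // scalerA -expfzDr // addrC.
Qed.

Lemma weight_conj_om_om X w a b : weight X w -> rng a -> rng b ->
  om a * om b * X * (omi b * omi a) = q ^ (w a + w b) *: X.
Proof.
move=> hX ha hb; have -> : om a * om b * X * (omi b * omi a) = om a * (om b * X * omi b) * omi a.
  by rewrite !mulrA.
by rewrite hX // -scalerAr -scalerAl hX // scalerA -expfzDr // addrC.
Qed.

Ltac gen_rel := first [ apply: psi_sq0 | apply: psis_sq0 | apply: acomm_psi | apply: acomm_psis
  | apply: acomm_psi_psis | apply: acomm_psis_psi ]; lia.
Ltac signed := repeat apply: signed_commM; right; gen_rel.
Ltac commute :=
  first [apply: comm_acomm_pairs | apply: comm_acommM | apply/commr_sym/comm_acommM]; gen_rel.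
Ltac sandwich := first
  [ apply: pair_sandwich0l; [gen_rel | signed | signed]
  | apply: pair_sandwich0r; [gen_rel | signed | signed] ].
Ltac torus :=
  repeat first [apply: commrZl | apply: commrZr | apply: commrM | apply/commr_sym/commrM];
  first [apply: comm_om | apply: comm_om_omi | apply/commr_sym/comm_om_omi | apply: comm_omi];
  lia.

Section Quadratic.
Hypothesis hq2 : q ^+ (2 * k) != 1.
Local Notation c := (q ^+ k).
Local Notation sp a := (psis a * psi a).
Local Notation X a := (om a ^+ k).
Local Notation Y a := (omi a ^+ k).

Lemma qk_subV_neq0 : c - c^-1 != 0.
Proof.
rewrite subr_eq0; apply: contra hq2 => /eqP cV.
by rewrite mulnC exprM expr2 {2}cV mulfV // expf_neq0.
Qed.

Lemma quadratic_relations a : rng a ->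
  psi a * psis a + c *: sp a = Y a /\ psi a * psis a + c^-1 *: sp a = X a.
Proof. by move=> ha; case: (Cl ha ha) => _ [_ [_ [_ [_ [_ [_ [-> [-> _]]]]]]]]. Qed.

Lemma psis_psi_scaledE a : rng a -> (c - c^-1) *: sp a = Y a - X a.
Proof.
move=> ha; have [<- <-] := quadratic_relations ha.
by rewrite opprD addrACA subrr add0r scalerBl.
Qed.

Lemma psi_psis_scaledE a : rng a -> (c - c^-1) *: (psi a * psis a) = c *: X a - c^-1 *: Y a.
Proof.
move=> ha; have [<- <-] := quadratic_relations ha.
rewrite !scalerDr !scalerA mulfV ?mulVf ?expf_neq0 //.
by rewrite opprD addrACA subrr addr0 scalerBl.
Qed.

Lemma comm_psi_sp a b : rng a -> rng b -> a != b -> GRing.comm (psi a) (sp b).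
Proof. by move=> ha hb ab; apply: comm_acommM; [apply: acomm_psi_psis | apply: acomm_psi]. Qed.

Lemma comm_psis_sp a b : rng a -> rng b -> a != b -> GRing.comm (psis a) (sp b).
Proof. by move=> ha hb ab; apply: comm_acommM; [apply: acomm_psis | apply: acomm_psis_psi]. Qed.

Lemma comm_psi_ps a b : rng a -> rng b -> a != b -> GRing.comm (psi a) (psi b * psis b).
Proof. by move=> ha hb ab; apply: comm_acommM; [apply: acomm_psi | apply: acomm_psi_psis]. Qed.

Lemma comm_sp a b : rng a -> rng b -> GRing.comm (sp a) (sp b).
Proof.
move=> ha hb; have [->|ab] := eqVneq a b; first exact: commr_refl.
by apply/commr_sym/commrM; apply/commr_sym; [apply: comm_psis_sp | apply: comm_psi_sp].
Qed.

Lemma comm_XX a b : rng a -> rng b -> GRing.comm (X a) (X b).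
Proof. by move=> ha hb; apply/commrX/commr_sym/commrX/comm_om. Qed.

Lemma comm_XY a b : rng a -> rng b -> GRing.comm (X a) (Y b).
Proof. by move=> ha hb; apply/commrX/commr_sym/commrX/commr_sym/comm_om_omi. Qed.

Lemma EF_commutator_A a b : rng a -> rng b -> a != b ->
  psi a * psis b * (psi b * psis a) - psi b * psis a * (psi a * psis b) =
  (c - c^-1)^-1 *: ((om a * omi b) ^+ k - (om b * omi a) ^+ k).
Proof.
move=> ha hb ab.
have EF x y : rng x -> rng y -> x != y ->
    psi x * psis y * (psi y * psis x) = sp y * (X x - c^-1 *: sp x).
  move=> hx hy xy; have [_ <-] := quadratic_relations hx.
  by rewrite addrK !mulrA -(mulrA (psi x)) (comm_psi_sp hx hy xy) -mulrA.
have ba : b != a by rewrite eq_sym.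
rewrite !EF // !mulrBr -!scalerAr (comm_sp ha hb) opprB addrA subrK.
rewrite (exprMn_comm _ (comm_om_omi ha hb)) (exprMn_comm _ (comm_om_omi hb ha)).
apply: (scalerI qk_subV_neq0).
rewrite scalerA mulfV ?qk_subV_neq0 // scale1r scalerBr !(scalerAl _ (sp _)) !psis_psi_scaledE //.
rewrite !mulrBl (comm_XX ha hb) opprB addrA subrK.
by rewrite -(comm_XY ha hb) -(comm_XY hb ha).
Qed.

Lemma EF_commutator_D a b : rng a -> rng b -> a != b ->
  psi a * psi b * (psis b * psis a) - psis b * psis a * (psi a * psi b) =
  (c - c^-1)^-1 *: ((q *: (om a * om b)) ^+ k - (q^-1 *: (omi b * omi a)) ^+ k).
Proof.
move=> ha hb ab; have ba : b != a by rewrite eq_sym.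
have -> : psi a * psi b * (psis b * psis a) = psi b * psis b * (psi a * psis a).
  by rewrite !mulrA -(mulrA (psi a)) (comm_psi_ps ha hb ab) -!mulrA.
have -> : psis b * psis a * (psi a * psi b) = sp a * sp b.
  by rewrite !mulrA -(mulrA (psis b)) (comm_psis_sp hb ha ba) -!mulrA.
have [Ya _] := quadratic_relations ha; have [_ Xb] := quadratic_relations hb.
have -> : psi b * psis b * (psi a * psis a) - sp a * sp b =
          X b * (psi a * psis a) - c^-1 *: (sp b * Y a).
  rewrite -Xb -Ya mulrDl mulrDr -!scalerAl -scalerAr !scalerDr scalerA mulVf ?expf_neq0 //.
  by rewrite scale1r (comm_sp ha hb) opprD addrA addrK.
rewrite !exprZn exprVn (exprMn_comm _ (comm_om ha hb)) (exprMn_comm _ (comm_omi hb ha)).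
apply: (scalerI qk_subV_neq0); rewrite scalerA mulfV ?qk_subV_neq0 // scale1r.
rewrite scalerBr scalerAr psi_psis_scaledE // scalerA (mulrC (c - _)) -scalerA.
rewrite (scalerAl _ (sp _)) psis_psi_scaledE // mulrBr mulrBl !scalerBr -!scalerAr.
by rewrite opprB addrA subrK (comm_XX ha hb).
Qed.

Lemma EF_commutator_B a s : rng a -> s ^+ 2 = q ->
  psi a * psis a - psis a * psi a =
  (s ^+ k - s ^- k)^-1 *: ((s *: om a) ^+ k - (s^-1 *: omi a) ^+ k).
Proof.
move=> ha sq; set t := s ^+ k.
have ct : c = t * t by rewrite -sq -exprM -exprD addnn -mul2n.
have t0 : t != 0 by rewrite expf_neq0 //; apply: contra_neq q0 => s0; rewrite -sq s0 expr0n.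
have tt1 : t * t - 1 != 0.
  apply: contraNneq qk_subV_neq0 => /eqP; rewrite subr_eq0 => /eqP tt.
  by rewrite ct tt invr1 subrr.
rewrite !exprZn exprVn -/t; apply: (scalerI qk_subV_neq0).
rewrite scalerBr psi_psis_scaledE // psis_psi_scaledE // !scalerA scalerBr !scalerA.
rewrite opprB addrACA -opprD -(scale1r (X a)) -(scale1r (Y a)) !scalerA !mulr1 -!scalerDl.
by congr (_ *: _ - _ *: _); rewrite ct; field; rewrite t0 tt1.
Qed.

End Quadratic.

Section WeightCriterion.
Variables (Q : K) (r : nat) (d : nat -> nat) (alpha : nat -> nat -> int).
Variables (E F Kg Ki : nat -> A).
Local Notation rng_r i := (1 <= i <= r)%N.
Local Notation Qd i := (Q ^+ d i).
Hypothesis Kg_torus : forall i j, rng_r i -> rng_r j ->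
  [/\ GRing.comm (Kg i) (Kg j), Kg i * Ki i = 1 & Ki i * Kg i = 1].
Hypothesis Kg_conj : forall i X w, rng_r i -> weight X w ->
  Kg i * X * Ki i = q ^ inner n (alpha i) w *: X.
Hypothesis weight_EF : forall j, rng_r j ->
  weight (E j) (alpha j) /\ weight (F j) (fun a => - alpha j a).
Hypothesis cartanE : forall i j, rng_r i -> rng_r j ->
  Qd i ^ cartan_of n alpha i j = q ^ inner n (alpha i) (alpha j).
Hypothesis comm_EF : forall i j, rng_r i -> rng_r j -> i != j -> GRing.comm (E i) (F j).
Hypothesis EF_diag : forall i, rng_r i ->
  E i * F i - F i * E i = (Qd i ^+ k - Qd i ^- k)^-1 *: (Kg i ^+ k - Ki i ^+ k).
Hypothesis serre_EF : forall i j x, rng_r i -> rng_r j -> i != j ->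
  serre x `|1 - cartan_of n alpha i j|%N (E i) (E j) = 0 /\
  serre x `|1 - cartan_of n alpha i j|%N (F i) (F j) = 0.

Lemma U_relations_of_weights : U_relations Q k r d (cartan_of n alpha) E F Kg Ki.
Proof.
move=> i j hi hj /=; have [KK KKi KiK] := Kg_torus hi hj; have [wE wF] := weight_EF hj.
do 6?split=> //.
- by rewrite (Kg_conj hi wE) cartanE.
- by rewrite (Kg_conj hi wF) innerNr -!invr_expz cartanE.
- have [<-|ij] := eqVneq i j; first exact: EF_diag.
  by apply/eqP; rewrite subr_eq0 comm_EF.
- by move=> ij; apply: serre_EF.
Qed.

End WeightCriterion.

Section Embeddings.
Hypothesis hq2 : q ^+ (2 * k) != 1.

Section TypeA.
Local Notation E := (Th_E psi psis).
Local Notation F := (Th_F psi psis).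
Local Notation Kg := (Th_K om omi).
Local Notation Ki := (Th_Ki om omi).
Local Notation rng1 i := (1 <= i < n)%N.

Lemma torus_A i j : rng1 i -> rng1 j ->
  [/\ GRing.comm (Kg i) (Kg j), Kg i * Ki i = 1 & Ki i * Kg i = 1].
Proof.
move=> hi hj; split; first by rewrite /Th_K; torus.
  by apply: mulr_pair1; [apply: om_omi | apply: omi_om]; lia.
by apply: mulr_pair1; [apply: om_omi | apply: omi_om]; lia.
Qed.

Lemma Kg_conj_A i X w : rng1 i -> weight X w ->
  Kg i * X * Ki i = q ^ inner n (root_sl i) w *: X.
Proof. by move=> hi hX; rewrite inner_root_sl // (weight_conj_om_omi hX) //; lia. Qed.

Lemma weight_EF_A j : rng1 j -> weight (E j) (root_sl j) /\ weight (F j) (fun a => - root_sl j a).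
Proof.
move=> hj; split; first by apply: weightM; [apply: weight_psi | apply: weight_psis]; lia.
apply: weight_eq; first by apply: weightM; [apply: weight_psi | apply: weight_psis]; lia.
by move=> a; rewrite /root_sl; lia.
Qed.

Lemma cartan_A i j : rng1 i ->
  cartan_of n (fun i => root_sl i) i j = inner n (root_sl i) (root_sl j).
Proof. by move=> hi; apply: cartan_of_norm2; rewrite inner_root_sl // /root_sl /e_; lia. Qed.

Lemma comm_EF_A i j : rng1 i -> rng1 j -> i != j -> GRing.comm (E i) (F j).
Proof. by move=> hi hj ij; commute. Qed.

Lemma EF_diag_A i : rng1 i ->
  E i * F i - F i * E i = (q ^+ k - q ^- k)^-1 *: (Kg i ^+ k - Ki i ^+ k).
Proof. by move=> hi; apply: EF_commutator_A; lia. Qed.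

Lemma serre_A i j x : rng1 i -> rng1 j -> i != j ->
  serre x `|1 - inner n (root_sl i) (root_sl j)|%N (E i) (E j) = 0 /\
  serre x `|1 - inner n (root_sl i) (root_sl j)|%N (F i) (F j) = 0.
Proof.
move=> hi hj ij; rewrite inner_root_sl //.
have [adj|nadj] := boolP ((j == i.+1) || (i == j.+1)).
  have -> : root_sl j i - root_sl j i.+1 = -1 by rewrite /root_sl /e_; lia.
  split; apply: serre_sq0 => //; rewrite /Th_E /Th_F.
  - by apply: pair_sq0; [gen_rel | signed].
  - by move=> _; case/orP: adj => /eqP ?; subst; sandwich.
  - by apply: pair_sq0; [gen_rel | signed].
  - by move=> _; case/orP: adj => /eqP ?; subst; sandwich.
have -> : root_sl j i - root_sl j i.+1 = 0 by rewrite /root_sl /e_; lia.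
by split; apply: serre1_comm; commute.
Qed.

Lemma U_relations_A :
  U_relations q k n.-1 (fun _ => 1%N) (cartan_of n (fun i => root_sl i)) E F Kg Ki.
Proof.
apply: U_relations_of_weights => [i j hi hj | i X w hi | j hj | i j hi hj | i j hi hj | i hi
  | i j x hi hj ij].
- by apply: torus_A; lia.
- by apply: Kg_conj_A; lia.
- by apply: weight_EF_A; lia.
- by rewrite expr1 cartan_A //; lia.
- by apply: comm_EF_A; lia.
- by rewrite expr1; apply: EF_diag_A; lia.
- by rewrite cartan_A; [apply: serre_A | ]; lia.
Qed.

End TypeA.

Section TypeD.
Hypothesis n2 : (2 <= n)%N.
Local Notation E := (ThD_E n psi psis).
Local Notation F := (ThD_F n psi psis).
Local Notation Kg := (ThD_K q n om omi).
Local Notation Ki := (ThD_Ki q n om omi).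
Local Notation root_Dn := (fun m => e_ n.-1 m + e_ n m).

Lemma torus_D i j : rng i -> rng j ->
  [/\ GRing.comm (Kg i) (Kg j), Kg i * Ki i = 1 & Ki i * Kg i = 1].
Proof.
move=> hi hj; rewrite /ThD_K /ThD_Ki /Th_K /Th_Ki.
split; first by do 2 case: ifP => ?; torus.
all: case: ifP => ?; rewrite ?scalerMV ?scalerVM //.
all: by apply: mulr_pair1; first [apply: om_omi | apply: omi_om]; lia.
Qed.

Lemma Kg_conj_D i X w : rng i -> weight X w ->
  Kg i * X * Ki i = q ^ inner n (root_so_even n i) w *: X.
Proof.
move=> hi hX; rewrite inner_root_so_even // /ThD_K /ThD_Ki; case: ifP => hin.
  by rewrite (weight_conj_om_omi hX) //; lia.
by rewrite scaler_conj // (weight_conj_om_om hX) //; lia.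
Qed.

Lemma weight_EF_D j : rng j ->
  weight (E j) (root_so_even n j) /\ weight (F j) (fun a => - root_so_even n j a).
Proof.
move=> hj; rewrite /ThD_E /ThD_F /root_so_even; case: ifP => hjn.
  by apply: weight_EF_A; lia.
split; first by apply: weightM; apply: weight_psi; lia.
by apply: weight_eq; [apply: weightM; apply: weight_psis | move=> a /=]; lia.
Qed.

Lemma cartan_D i j : rng i ->
  cartan_of n (root_so_even n) i j = inner n (root_so_even n i) (root_so_even n j).
Proof.
move=> hi; apply: cartan_of_norm2; rewrite inner_root_so_even // /root_so_even.
by case: ltnP => hin; rewrite /root_sl /e_; lia.
Qed.

(* Here both products vanish, since each repeats a generator (e.g. [psi_(n-1)]). *)
Lemma comm_tail_D :
  [/\ GRing.comm (psi n.-1 * psis n) (psi n.-1 * psi n),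
      GRing.comm (psi n * psis n.-1) (psis n * psis n.-1),
      GRing.comm (psi n.-1 * psis n) (psis n * psis n.-1) &
      GRing.comm (psi n.-1 * psi n) (psi n * psis n.-1)].
Proof.
split; apply: comm_of_mul0; first
  [ apply: pairs_mul0_inner; gen_rel
  | apply: pairs_mul0_outer; [gen_rel | signed]
  | apply: pairs_mul0_first; [gen_rel | signed]
  | apply: pairs_mul0_second; [gen_rel | signed] ].
Qed.

Lemma comm_EF_D i j : rng i -> rng j -> i != j -> GRing.comm (E i) (F j).
Proof.
move=> hi hj ij; have [_ _ EF EF'] := comm_tail_D; have en : n.-1.+1 = n by lia.
rewrite /ThD_E /ThD_F; have [hin|hin] := ltnP i n; have [hjn|hjn] := ltnP j n.
- by apply: comm_EF_A; lia.
- by rewrite /Th_E; have [->|?] := eqVneq i n.-1; [rewrite en | commute].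
- by rewrite /Th_F; have [->|?] := eqVneq j n.-1; [rewrite en | commute].
- by exfalso; lia.
Qed.

Lemma EF_diag_D i : rng i ->
  E i * F i - F i * E i = (q ^+ k - q ^- k)^-1 *: (Kg i ^+ k - Ki i ^+ k).
Proof.
move=> hi; rewrite /ThD_E /ThD_F /ThD_K /ThD_Ki; case: ifP => hin.
  by apply: EF_diag_A; lia.
by apply: EF_commutator_D; lia.
Qed.

Lemma serre_D_jn i (x : K) : (1 <= i < n)%N ->
  serre x `|1 - inner n (root_sl i) root_Dn|%N (Th_E psi psis i) (psi n.-1 * psi n) = 0 /\
  serre x `|1 - inner n (root_sl i) root_Dn|%N (Th_F psi psis i) (psis n * psis n.-1) = 0.
Proof.
move=> hi; rewrite inner_root_sl // /Th_E /Th_F.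
have [EE FF _ _] := comm_tail_D; have en : n.-1.+1 = n by lia.
have [->|i1] := eqVneq i n.-1.
  have -> : e_ n.-1 n.-1 + e_ n n.-1 - (e_ n.-1 n.-1.+1 + e_ n n.-1.+1) = 0 by rewrite /e_; lia.
  by rewrite en; split; apply: serre1_comm.
have [i2|i2] := eqVneq i.+1 n.-1.
  have -> : e_ n.-1 i + e_ n i - (e_ n.-1 i.+1 + e_ n i.+1) = -1 by rewrite /e_; lia.
  by split; apply: serre_sq0 => //;
    first [apply: pair_sq0; [gen_rel | signed] | move=> _; sandwich].
have -> : e_ n.-1 i + e_ n i - (e_ n.-1 i.+1 + e_ n i.+1) = 0 by rewrite /e_; lia.
by split; apply: serre1_comm; commute.
Qed.

Lemma serre_D_in j (x : K) : (1 <= j < n)%N ->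
  serre x `|1 - inner n root_Dn (root_sl j)|%N (psi n.-1 * psi n) (Th_E psi psis j) = 0 /\
  serre x `|1 - inner n root_Dn (root_sl j)|%N (psis n * psis n.-1) (Th_F psi psis j) = 0.
Proof.
move=> hj; rewrite innerDl !inner_e; try lia.
rewrite /Th_E /Th_F /root_sl; have [EE FF _ _] := comm_tail_D; have en : n.-1.+1 = n by lia.
have [->|j1] := eqVneq j n.-1.
  have -> : e_ n.-1 n.-1 - e_ n.-1.+1 n.-1 + (e_ n.-1 n - e_ n.-1.+1 n) = 0 by rewrite /e_; lia.
  by rewrite en; split; apply/serre1_comm/commr_sym.
have [j2|j2] := eqVneq j.+1 n.-1.
  have -> : e_ j n.-1 - e_ j.+1 n.-1 + (e_ j n - e_ j.+1 n) = -1 by rewrite /e_; lia.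
  by split; apply: serre_sq0 => //;
    first [apply: pair_sq0; [gen_rel | signed] | move=> _; sandwich].
have -> : e_ j n.-1 - e_ j.+1 n.-1 + (e_ j n - e_ j.+1 n) = 0 by rewrite /e_; lia.
by split; apply: serre1_comm; commute.
Qed.

Lemma serre_D i j x : rng i -> rng j -> i != j ->
  serre x `|1 - cartan_of n (root_so_even n) i j|%N (E i) (E j) = 0 /\
  serre x `|1 - cartan_of n (root_so_even n) i j|%N (F i) (F j) = 0.
Proof.
move=> hi hj ij; rewrite cartan_D // /ThD_E /ThD_F /root_so_even.
have [hin|hin] := ltnP i n; have [hjn|hjn] := ltnP j n.
- by apply: serre_A; lia.
- by apply: serre_D_jn; lia.
- by apply: serre_D_in; lia.
- by exfalso; lia.
Qed.

Lemma U_relations_D :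
  U_relations q k n (fun _ => 1%N) (cartan_of n (root_so_even n)) E F Kg Ki.
Proof.
apply: U_relations_of_weights => [i j hi hj | i X w hi | j hj | i j hi hj | i j hi hj | i hi
  | i j x hi hj ij].
- exact: torus_D.
- exact: Kg_conj_D.
- exact: weight_EF_D.
- by rewrite expr1 cartan_D.
- exact: comm_EF_D.
- by rewrite expr1; apply: EF_diag_D.
- exact: serre_D.
Qed.

End TypeD.

Section TypeB.
Hypothesis n1 : (0 < n)%N.
Variable s : K.
Hypothesis hs : s ^+ 2 = q.
Local Notation E := (ThB_E n psi psis).
Local Notation F := (ThB_F n psi psis).
Local Notation Kg := (ThB_K n om omi s).
Local Notation Ki := (ThB_Ki n om omi s).

Lemma s_neq0 : s != 0.
Proof. by apply: contra_neq q0 => s0; rewrite -hs s0 expr0n. Qed.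

Lemma torus_B i j : rng i -> rng j ->
  [/\ GRing.comm (Kg i) (Kg j), Kg i * Ki i = 1 & Ki i * Kg i = 1].
Proof.
move=> hi hj; have s0 := s_neq0; rewrite /ThB_K /ThB_Ki /Th_K /Th_Ki.
split; first by do 2 case: ifP => ?; first [exact: commr_refl | torus].
all: case: ifP => ?; rewrite ?scalerMV ?scalerVM //.
all: by first [apply: mulr_pair1 | idtac]; first [apply: om_omi | apply: omi_om]; lia.
Qed.

Lemma Kg_conj_B i X w : rng i -> weight X w ->
  Kg i * X * Ki i = q ^ inner n (root_so_odd n i) w *: X.
Proof.
move=> hi hX; rewrite inner_root_so_odd // /ThB_K /ThB_Ki; case: ifP => hin.
  by rewrite (weight_conj_om_omi hX) //; lia.
by rewrite scaler_conj ?s_neq0 // hX //; lia.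
Qed.

Lemma weight_EF_B j : rng j ->
  weight (E j) (root_so_odd n j) /\ weight (F j) (fun a => - root_so_odd n j a).
Proof.
move=> hj; rewrite /ThB_E /ThB_F /root_so_odd; case: ifP => hjn.
  by apply: weight_EF_A; lia.
by split; [apply: weight_psi | apply: weight_psis]; lia.
Qed.

Lemma cartan_B_lt i j : (1 <= i < n)%N ->
  cartan_of n (root_so_odd n) i j = inner n (root_sl i) (root_so_odd n j).
Proof.
move=> hi; have hin : (i < n)%N by lia.
rewrite cartan_of_norm2 /root_so_odd hin //.
by rewrite inner_root_sl // /root_sl /e_; lia.
Qed.

Lemma cartan_B_n j :
  cartan_of n (root_so_odd n) n j = 2 * inner n (e_ n) (root_so_odd n j).
Proof.
rewrite cartan_of_norm1 /root_so_odd ltnn //.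
by rewrite inner_e /e_ ?eqxx //; lia.
Qed.

Lemma cartan_B i j : rng i ->
  (s ^+ d_so_odd n i) ^ cartan_of n (root_so_odd n) i j =
  q ^ inner n (root_so_odd n i) (root_so_odd n j).
Proof.
move=> hi; rewrite /d_so_odd; have [hin|hin] := ltnP i n.
  by rewrite hs cartan_B_lt /root_so_odd ?hin //; lia.
have -> : i = n by lia.
by rewrite cartan_B_n expr1 -exprz_exp -exprnP hs /root_so_odd ltnn.
Qed.

Lemma comm_EF_B i j : rng i -> rng j -> i != j -> GRing.comm (E i) (F j).
Proof.
move=> hi hj ij; rewrite /ThB_E /ThB_F.
have [hin|hin] := ltnP i n; have [hjn|hjn] := ltnP j n.
- by apply: comm_EF_A; lia.
- by rewrite /Th_E; commute.
- by rewrite /Th_F; commute.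
- by exfalso; lia.
Qed.

Lemma EF_diag_B i : rng i ->
  E i * F i - F i * E i = ((s ^+ d_so_odd n i) ^+ k - (s ^+ d_so_odd n i) ^- k)^-1 *:
    (Kg i ^+ k - Ki i ^+ k).
Proof.
move=> hi; rewrite /d_so_odd /ThB_E /ThB_F /ThB_K /ThB_Ki; case: ifP => hin.
  by rewrite hs; apply: EF_diag_A; lia.
by rewrite expr1; apply: EF_commutator_B hs; lia.
Qed.

Lemma serre_B_jn i (x : K) : (1 <= i < n)%N ->
  serre x `|1 - inner n (root_sl i) (e_ n)|%N (Th_E psi psis i) (psi n) = 0 /\
  serre x `|1 - inner n (root_sl i) (e_ n)|%N (Th_F psi psis i) (psis n) = 0.
Proof.
move=> hi; rewrite inner_root_sl // /Th_E /Th_F.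
have [i1|i1] := eqVneq i.+1 n.
  have -> : e_ n i - e_ n i.+1 = -1 by rewrite /e_; lia.
  by split; apply: serre_sq0 => //;
    first [apply: pair_sq0; [gen_rel | signed] | move=> _; sandwich].
have -> : e_ n i - e_ n i.+1 = 0 by rewrite /e_; lia.
by split; apply: serre1_comm; commute.
Qed.

Lemma serre_B_in j (x : K) : (1 <= j < n)%N ->
  serre x `|1 - (2 * inner n (e_ n) (root_sl j))%R|%N (psi n) (Th_E psi psis j) = 0 /\
  serre x `|1 - (2 * inner n (e_ n) (root_sl j))%R|%N (psis n) (Th_F psi psis j) = 0.
Proof.
move=> hj; rewrite inner_e /Th_E /Th_F /root_sl; last by lia.
have [j1|j1] := eqVneq j.+1 n.
  have -> : 2 * (e_ j n - e_ j.+1 n) = -2 by rewrite /e_; lia.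
  by split; apply: serre_sq0 => //; gen_rel.
have -> : 2 * (e_ j n - e_ j.+1 n) = 0 by rewrite /e_; lia.
by split; apply: serre1_comm; commute.
Qed.

Lemma serre_B i j x : rng i -> rng j -> i != j ->
  serre x `|1 - cartan_of n (root_so_odd n) i j|%N (E i) (E j) = 0 /\
  serre x `|1 - cartan_of n (root_so_odd n) i j|%N (F i) (F j) = 0.
Proof.
move=> hi hj ij; rewrite /ThB_E /ThB_F.
have [hin|hin] := ltnP i n; last first.
  have -> : i = n by lia.
  by rewrite cartan_B_n /root_so_odd; case: ltnP => hjn; [apply: serre_B_in | exfalso]; lia.
rewrite cartan_B_lt /root_so_odd; last by lia.
by case: ltnP => hjn; [apply: serre_A | apply: serre_B_jn]; lia.
Qed.

Lemma U_relations_B :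
  U_relations s k n (d_so_odd n) (cartan_of n (root_so_odd n)) E F Kg Ki.
Proof.
apply: U_relations_of_weights => [i j hi hj | i X w hi | j hj | i j hi hj | i j hi hj | i hi
  | i j x hi hj ij].
- exact: torus_B.
- exact: Kg_conj_B.
- exact: weight_EF_B.
- exact: cartan_B.
- exact: comm_EF_B.
- exact: EF_diag_B.
- exact: serre_B.
Qed.

End TypeB.

End Embeddings.
End Clifford.

Theorem proposition3p17 (K : fieldType) (q : K) (n k : nat) :
  (2%:R : K) != 0 -> q != 0 -> (0 < n)%N -> (0 < k)%N -> q ^+ (2 * k) != 1 ->
  forall (A : algType K) (psi psis om omi : nat -> A),
  Cl_relations q n k psi psis om omi ->
  [/\ U_relations q k n.-1 (fun _ => 1%N) (cartan_of n (fun i => root_sl i))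
        (Th_E psi psis) (Th_F psi psis) (Th_K om omi) (Th_Ki om omi),
      (2 <= n)%N ->
      U_relations q k n (fun _ => 1%N) (cartan_of n (root_so_even n))
        (ThD_E n psi psis) (ThD_F n psi psis) (ThD_K q n om omi) (ThD_Ki q n om omi) &
      forall s : K, s ^+ 2 = q ->
      U_relations s k n (d_so_odd n) (cartan_of n (root_so_odd n))
        (ThB_E n psi psis) (ThB_F n psi psis) (ThB_K n om omi s) (ThB_Ki n om omi s)].
Proof.
(* [0 < k] is implied by [q ^+ (2 * k) != 1]. *)
move=> two0 q0 n0 _ hq2 A psi psis om omi Cl; split.
- exact: U_relations_A two0 q0 Cl hq2.
- by move=> n2; apply: U_relations_D two0 q0 Cl hq2 n2.
- by move=> s hs; apply: U_relations_B two0 q0 Cl hq2 n0 s hs.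
Qed.
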